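(* The difference operator $\setminus_F$ of the W3C SPARQL algebra is expressible in the core SPARQL algebra. That is, there is an expression built only from the core operations (projection $\pi_W$, selection $\sigma_F$, join $\Join$, union $\cup$ and simple difference $\setminus$) which, for every selection formula $F$ and all multisets of mappings $\Omega_1,\Omega_2$, evaluates to $\Omega_1 \setminus_F \Omega_2$, with the same multiplicities.
   Context: Fix pairwise disjoint infinite sets $I$ (IRIs), $L$ (literals) and $V$ (variables), and let $T = I \cup L$. Solution mappings. A (solution) mapping is a partial function $\mu : V \to T$ with domain $\operatorname{dom}(\mu)$. Two mappings $\mu_1,\mu_2$ are compatible, written $\mu_1 \sim \mu_2$, if $\mu_1(?X)=\mu_2(?X)$ for every $?X \in \operatorname{dom}(\mu_1)\cap\operatorname{dom}(\mu_2)$; in that case $\mu_1\cup\mu_2$ is again a mapping. Write $\mu_1 \nsim \mu_2$ otherwise. For a set $W\subseteq V$, the restriction $\mu_{|W}$ is the mapping with domain $\operatorname{dom}(\mu)\cap W$ that agrees with $\mu$ there. Selection formulas. The atomic selection formulas are $(?X = c)$, $(?X = ?Y)$ and $\operatorname{bound}(?X)$, for $?X,?Y\in V$ and $c \in I\cup L$. If $F, F'$ are selection formulas, so are $(F\land F')$, $(F\lor F')$ and $\neg(F)$. The value $\mu(F)\in\{\mathit{true},\mathit{false},\mathit{error}\}$ is defined as follows. - $(?X=c)$ is $\mathit{error}$ if $?X\notin\operatorname{dom}(\mu)$; otherwise it is $\mathit{true}$ iff $\mu(?X)=c$, and $\mathit{false}$ otherwise. - $(?X=?Y)$ is $\mathit{error}$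 if $?X$ or $?Y$ is not in $\operatorname{dom}(\mu)$; otherwise it is $\mathit{true}$ iff $\mu(?X)=\mu(?Y)$, and $\mathit{false}$ otherwise. - $\operatorname{bound}(?X)$ is $\mathit{true}$ iff $?X\in\operatorname{dom}(\mu)$, and $\mathit{false}$ otherwise. - $p\land q$ is $\mathit{false}$ if either conjunct is $\mathit{false}$; otherwise it is $\mathit{error}$ if either is $\mathit{error}$; otherwise it is $\mathit{true}$. - $p\lor q$ is $\mathit{true}$ if either disjunct is $\mathit{true}$; otherwise it is $\mathit{error}$ if either is $\mathit{error}$; otherwise it is $\mathit{false}$. - $\neg p$ swaps $\mathit{true}$ and $\mathit{false}$ and maps $\mathit{error}$ to $\mathit{error}$. Multisets. A multiset $\Omega$ of mappings assigns to each mapping $\mu$ a multiplicity $\mathrm{card}_\Omega(\mu)\ge 0$, with $\mu\in\Omega$ iff $\mathrm{card}_\Omega(\mu)>0$. W3C SPARQL algebra. It consists of the following operations, where $\Omega_1,\Omega_2$ are multisets of mappings. - Projection: $\pi_W(\Omega_1)=\{\mu_{|W}\mid \mu\in\Omega_1\}$, where $\mathrm{card}(\mu')=\sum_{\mu:\mu_{|W}=\mu'}\mathrm{card}_{\Omega_1}(\mu)$. - Selection: $\sigma_F(\Omega_1)=\{\mu\in\Omega_1\mid \mu(F)=\mathit{true}\}$, with multiplicities kept. - Join: $\Omega_1\Join\Omega_2=\{\mu_1\cup\mu_2\mid \mu_1\in\Omega_1,\mu_2\in\Omega_2,\mu_1\sim\mu_2\}$, where $\mathrm{card}(\mu)=\sum_{\mu=\mu_1\cup\mu_2}\mathrm{card}_{\Omega_1}(\mu_1)\cdot\mathrm{card}_{\Omega_2}(\mu_2)$.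 - Difference: $\Omega_1\setminus_F\Omega_2=\{\mu_1\in\Omega_1\mid \forall\mu_2\in\Omega_2,\ \mu_1\nsim\mu_2 \lor (\mu_1\sim\mu_2\land(\mu_1\cup\mu_2)(F)=\mathit{false})\}$, with multiplicities as in $\Omega_1$. - Union: $\Omega_1\cup\Omega_2$, with multiplicities added. - Minus: $\Omega_1-\Omega_2=\{\mu_1\in\Omega_1\mid\forall\mu_2\in\Omega_2,\ \mu_1\nsim\mu_2\lor\operatorname{dom}(\mu_1)\cap\operatorname{dom}(\mu_2)=\emptyset\}$, with multiplicities as in $\Omega_1$. - Left-join: $\Omega_1 \,⟕_F\, \Omega_2=\sigma_F(\Omega_1\Join\Omega_2)\cup(\Omega_1\setminus_F\Omega_2)$, with multiplicities added. Simple difference: $\Omega_1\setminus\Omega_2=\{\mu_1\in\Omega_1\mid\forall\mu_2\in\Omega_2,\ \mu_1\nsim\mu_2\}$, with multiplicities as in $\Omega_1$. The core SPARQL algebra consists of projection, selection, join, union and simple difference. An operator $O$ is expressible in an algebra (language) $L$ iff some subset of the operators of $L$ can express the same queries as $O$. *)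

From mathcomp Require Import all_boot boolp.
Set Implicit Arguments. Unset Strict Implicit. Unset Printing Implicit Defensive.

Section Sparql.
Variables (V T : Type).
(* V = variables, T = I ∪ L (instantiated with a sum type I + L). *)

Definition mapping := V -> option T.

Definition compat (m1 m2 : mapping) : Prop :=
  forall (X : V) (a b : T), m1 X = Some a -> m2 X = Some b -> a = b.
Definition compatb (m1 m2 : mapping) : bool := `[< compat m1 m2 >].

Definition munion (m1 m2 : mapping) : mapping :=
  fun X => match m1 X with Some a => Some a | None => m2 X end.

Definition restrict (W : V -> Prop) (m : mapping) : mapping :=
  fun X => if `[< W X >] then m X else None.

Inductive formula : Type :=
| FEqC  of V & T
| FEqV  of V & V
| FBound of V
| FAnd  of formula & formula
| FOr   of formula & formula
| FNot  of formula.

Inductive tval : Type := VTrue | VFalse | VError.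

Definition tand (p q : tval) : tval :=
  match p, q with
  | VFalse, _ | _, VFalse => VFalse
  | VError, _ | _, VError => VError
  | _, _ => VTrue
  end.
Definition tor (p q : tval) : tval :=
  match p, q with
  | VTrue, _ | _, VTrue => VTrue
  | VError, _ | _, VError => VError
  | _, _ => VFalse
  end.
Definition tnot (p : tval) : tval :=
  match p with VTrue => VFalse | VFalse => VTrue | VError => VError end.

Fixpoint feval (m : mapping) (F : formula) : tval :=
  match F with
  | FEqC X c => match m X with
                | None => VError
                | Some a => if `[< a = c >] then VTrue else VFalse end
  | FEqV X Y => match m X, m Y with
                | Some a, Some b => if `[< a = b >] then VTrue else VFalse
                | _, _ => VError end
  | FBound X => match m X with Some _ => VTrue | None => VFalse end
  | FAnd F1 F2 => tand (feval m F1) (feval m F2)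
  | FOr F1 F2 => tor (feval m F1) (feval m F2)
  | FNot F1 => tnot (feval m F1)
  end.

Definition is_true_val (v : tval) : bool := if v is VTrue then true else false.
Definition is_false_val (v : tval) : bool := if v is VFalse then true else false.

Definition mset := seq mapping.
Definition card (O : mset) (mu : mapping) : nat := count (fun nu => `[< nu = mu >]) O.
Definition meq (O1 O2 : mset) : Prop := forall mu, card O1 mu = card O2 mu.

Definition proj (W : V -> Prop) (O : mset) : mset := map (restrict W) O.
Definition sel (F : formula) (O : mset) : mset :=
  filter (fun mu => is_true_val (feval mu F)) O.
Definition join (O1 O2 : mset) : mset :=
  flatten [seq [seq munion m1 m2 | m2 <- O2 & compatb m1 m2] | m1 <- O1].
Definition munionset (O1 O2 : mset) : mset := O1 ++ O2.
Definition sdiff (O1 O2 : mset) : mset :=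
  filter (fun m1 => all (fun m2 => ~~ compatb m1 m2) O2) O1.
Definition diffF (F : formula) (O1 O2 : mset) : mset :=
  filter (fun m1 => all (fun m2 => ~~ compatb m1 m2 ||
            (compatb m1 m2 && is_false_val (feval (munion m1 m2) F))) O2) O1.

Inductive cexpr : Type :=
| CIn1 | CIn2
| CProj of (V -> Prop) & cexpr
| CSel of formula & cexpr
| CJoin of cexpr & cexpr
| CUnion of cexpr & cexpr
| CSDiff of cexpr & cexpr.

Fixpoint ceval (E : cexpr) (O1 O2 : mset) : mset :=
  match E with
  | CIn1 => O1
  | CIn2 => O2
  | CProj W e => proj W (ceval e O1 O2)
  | CSel F e => sel F (ceval e O1 O2)
  | CJoin e1 e2 => join (ceval e1 O1 O2) (ceval e2 O1 O2)
  | CUnion e1 e2 => munionset (ceval e1 O1 O2) (ceval e2 O1 O2)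
  | CSDiff e1 e2 => sdiff (ceval e1 O1 O2) (ceval e2 O1 O2)
  end.

End Sparql.

Definition infinite_type (A : Type) : Prop := exists f : nat -> A, injective f.

(* Partition Ω1 into blocks by selections on bound(?X) and ¬bound(?X), ?X
   ranging over the variables of F.  All mappings of a block B bind the same
   variables of F, so if μ1 ∈ B is compatible with μ2 ∪ μ1'|var(F) for some
   μ1' ∈ B, then F takes the same value there as on μ1 ∪ μ2; taking μ1' = μ1
   gives the converse.  Hence
     B \_F Ω2 = B \ σ_F'(Ω2 ⋈ π_var(F)(B)),
   where F' is an error-free formula that is true exactly when F is not false:
   σ keeps only the mappings on which F' is true, whereas \_F discards a
   mapping unless F is false. *)
From Pilot Require Import Defs.
From HB Require Import structures.
From mathcomp Require Import all_boot boolp.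
From Stdlib Require List.

Set Implicit Arguments.
Unset Strict Implicit.
Unset Printing Implicit Defensive.

Section ExpressDifference.
Variables (V T : Type).
Local Notation mapping := (mapping V T).
Local Notation mset := (mset V T).
Local Notation formula := (formula V T).

HB.instance Definition _ := gen_eqMixin mapping.

Lemma meq_perm (O1 O2 : mset) : perm_eq O1 O2 -> meq O1 O2.
Proof. by move=> /permP eqO mu; exact: eqO. Qed.

Lemma joinP (O1 O2 : mset) s :
  reflect (exists m1 m2, [/\ m1 \in O1, m2 \in O2, compatb m1 m2 & s = munion m1 m2])
          (s \in join O1 O2).
Proof.
apply: (iffP flattenP) => [[_ /mapP [m1 m1O1 ->] /mapP [m2 + ->]]|].
  by rewrite mem_filter => /andP [c12 m2O2]; exists m1, m2.
case=> m1 [m2 [m1O1 m2O2 c12 ->]]; exists [seq munion m1 m | m <- O2 & compatb m1 m].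
  by apply/mapP; exists m1.
by apply/mapP; exists m2; rewrite ?mem_filter ?c12.
Qed.

Lemma compat_sym (m1 m2 : mapping) : compat m1 m2 -> compat m2 m1.
Proof. by move=> c12 X a b h1 h2; rewrite (c12 X b a h2 h1). Qed.

Lemma compat_refl (m : mapping) : compat m m.
Proof. by move=> X a b -> []. Qed.

Lemma compat_restrictr (W : V -> Prop) (m1 m2 : mapping) :
  compat m1 m2 -> compat m1 (restrict W m2).
Proof. by move=> c12 X a b h1; rewrite /restrict; case: asboolP => // _; exact: c12. Qed.

Lemma compat_munion (m m1 m2 : mapping) :
  compat m m1 -> compat m m2 -> compat m (munion m1 m2).
Proof.
move=> c1 c2 X a b h; rewrite /munion; case h1: (m1 X) => [c|]; last exact: c2.
by case=> <-; exact: c1 h h1.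
Qed.

Lemma compat_munionl (m m1 m2 : mapping) : compat m (munion m1 m2) -> compat m m1.
Proof. by move=> c X a b h h1; apply: c h _; rewrite /munion h1. Qed.

Definition same_dom (W : V -> Prop) (m m' : mapping) :=
  forall X, W X -> (m X = None <-> m' X = None).

Lemma munion_restrict_agree (W : V -> Prop) (m1 m1' m2 : mapping) X :
  same_dom W m1 m1' -> compat m1 (munion m2 (restrict W m1')) -> W X ->
  munion m1 m2 X = munion m2 (restrict W m1') X.
Proof.
move=> dom11' c WX; have rX : restrict W m1' X = m1' X by rewrite /restrict asboolT.
rewrite {1}/munion; case h1: (m1 X) => [a|]; last first.
  by rewrite /munion rX (proj1 (dom11' X WX) h1); case: (m2 X).
case h: (munion m2 (restrict W m1') X) => [b|]; first by rewrite (c X a b h1 h).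
move: h; rewrite /munion rX; case: (m2 X) => // h1'.
by move: (proj2 (dom11' X WX) h1'); rewrite h1.
Qed.

Fixpoint fvars (F : formula) : seq V :=
  match F with
  | FEqC X _ | FBound X => [:: X]
  | FEqV X Y => [:: X; Y]
  | FAnd F1 F2 | FOr F1 F2 => fvars F1 ++ fvars F2
  | FNot F1 => fvars F1
  end.

Lemma eq_feval (F : formula) (m m' : mapping) :
  (forall X, List.In X (fvars F) -> m X = m' X) -> feval m F = feval m' F.
Proof.
elim: F => [X c|X Y|X|F1 IH1 F2 IH2|F1 IH1 F2 IH2|F1 IH1] /= eqm.
- by rewrite eqm //; left.
- by rewrite !eqm //; [right; left|left].
- by rewrite eqm //; left.
- by rewrite IH1 ?IH2 // => X inX; apply: eqm; apply: List.in_or_app; [right|left].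
- by rewrite IH1 ?IH2 // => X inX; apply: eqm; apply: List.in_or_app; [right|left].
- by rewrite IH1.
Qed.

Definition holds (F : formula) (m : mapping) : bool := is_true_val (feval m F).

Lemma holds_and (F1 F2 : formula) m : holds (FAnd F1 F2) m = holds F1 m && holds F2 m.
Proof. by rewrite /holds /=; case: (feval m F1); case: (feval m F2). Qed.

Lemma holds_bound X (m : mapping) : holds (FBound T X) m = isSome (m X).
Proof. by rewrite /holds /=; case: (m X). Qed.

Lemma holds_not_bound X (m : mapping) : holds (FNot (FBound T X)) m = ~~ isSome (m X).
Proof. by rewrite /holds /=; case: (m X). Qed.

Definition error_to (e : bool) (v : Defs.tval) : Defs.tval :=
  if v is VError then (if e then VTrue else VFalse) else v.

(* The atoms can only be erroneous on unbound variables, so guarding them by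
   boundedness removes the error; negation swaps the reading of an error. *)
Fixpoint error_as (e : bool) (F : formula) : formula :=
  let guard D := if e then FOr (FNot D) F else FAnd D F in
  match F with
  | FEqC X _ => guard (FBound T X)
  | FEqV X Y => guard (FAnd (FBound T X) (FBound T Y))
  | FBound _ => F
  | FAnd F1 F2 => FAnd (error_as e F1) (error_as e F2)
  | FOr F1 F2 => FOr (error_as e F1) (error_as e F2)
  | FNot F1 => FNot (error_as (~~ e) F1)
  end.

Lemma feval_error_as e (F : formula) m : feval m (error_as e F) = error_to e (feval m F).
Proof.
elim: F e => [X c|X Y|X|F1 IH1 F2 IH2|F1 IH1 F2 IH2|F1 IH1] e /=.
- by case: e => /=; case: (m X) => //= a; case: ifP.
- by case: e => /=; case: (m X); case: (m Y) => //= a b; case: ifP.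
- by case: (m X).
- by rewrite IH1 IH2; case: e; case: (feval m F1); case: (feval m F2).
- by rewrite IH1 IH2; case: e; case: (feval m F1); case: (feval m F2).
- by rewrite IH1; case: e; case: (feval m F1).
Qed.

Lemma holds_error_as_true (F : formula) m :
  holds (error_as true F) m = ~~ is_false_val (feval m F).
Proof. by rewrite /holds feval_error_as; case: (feval m F). Qed.

Variable F : formula.
Local Notation W := (fun X => List.In X (fvars F)).

Definition block_diff (G : formula) : cexpr V T :=
  CSDiff (CSel G (CIn1 V T))
         (CSel (error_as true F) (CJoin (CIn2 V T) (CProj W (CSel G (CIn1 V T))))).

Lemma block_diffE (G : formula) (O1 O2 : mset) :
  (forall m m', holds G m -> holds G m' -> same_dom W m m') ->
  ceval (block_diff G) O1 O2 = filter (holds G) (diffF F O1 O2).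
Proof.
move=> domG; rewrite /= /sdiff /sel /diffF -!filter_predI.
apply: eq_in_filter => m1 m1O1; rewrite /predI /=.
case Gm1: (holds G m1); rewrite -[is_true_val _]/(holds G m1) Gm1 ?andbT ?andbF //.
apply/allP/allP => [notc m2 m2O2|diffm1 s].
  case c12: (compatb m1 m2) => //=; apply/negPn/negP => notF.
  have {}c12 : compat m1 m2 by exact/asboolP.
  pose s := munion m2 (restrict W m1).
  have c1s : compat m1 s by apply: compat_munion c12 _; apply/compat_restrictr/compat_refl.
  move: (contraL (notc s) (asboolT c1s)) => /negP; apply.
  rewrite mem_filter; apply/andP; split.
    rewrite -/(holds _ s) holds_error_as_true -(@eq_feval _ (munion m1 m2)) // => X WX.
    exact: munion_restrict_agree.
  apply/joinP; exists m2, (restrict W m1); split=> //.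
    by rewrite map_f // mem_filter; apply/andP.
  exact/asboolP/compat_restrictr/compat_sym.
rewrite mem_filter => /andP [notF /joinP [m2 [_ [m2O2 /mapP [m1' + ->] _ eq_s]]]].
rewrite mem_filter => /andP [Gm1' _]; rewrite {}eq_s in notF *; apply/negP => /asboolP c1s.
have c12 : compatb m1 m2 by exact/asboolP/(compat_munionl c1s).
have := diffm1 m2 m2O2; rewrite c12 /= => isF.
move: notF; rewrite -/(holds _ _) holds_error_as_true -(@eq_feval _ (munion m1 m2)) ?isF //.
by move=> X WX; exact: munion_restrict_agree (domG _ _ Gm1 Gm1') c1s WX.
Qed.

Fixpoint split_bound (vs : seq V) (G : formula) (E : formula -> cexpr V T) : cexpr V T :=
  if vs is X :: vs' then
    CUnion (split_bound vs' (FAnd G (FBound T X)) E)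
           (split_bound vs' (FAnd G (FNot (FBound T X))) E)
  else E G.

Definition dom_determined (vs : seq V) (G : formula) :=
  forall m m', holds G m -> holds G m' ->
    same_dom (fun X => List.In X vs) m m' -> same_dom W m m'.

Lemma dom_determined_cons X vs (G B : formula) :
  (forall m m', holds B m -> holds B m' -> isSome (m X) = isSome (m' X)) ->
  dom_determined (X :: vs) G -> dom_determined vs (FAnd G B).
Proof.
move=> domB domG m m'; rewrite !holds_and => /andP [Gm Bm] /andP [Gm' Bm'] dom.
apply: domG => // Y [<-|]; last exact: dom.
by move: (domB _ _ Bm Bm'); case: (m X); case: (m' X) => // *; split.
Qed.

Lemma perm_split_bound (E : formula -> cexpr V T) (D O1 O2 : mset) vs G :
  (forall G', dom_determined [::] G' -> ceval (E G') O1 O2 = filter (holds G') D) ->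
  dom_determined vs G ->
  perm_eq (ceval (split_bound vs G E) O1 O2) (filter (holds G) D).
Proof.
elim: vs G => [|X vs IH] G EG domG /=; first by rewrite EG.
have dom1 : dom_determined vs (FAnd G (FBound T X)).
  by apply: dom_determined_cons domG => m m'; rewrite !holds_bound => -> ->.
have dom2 : dom_determined vs (FAnd G (FNot (FBound T X))).
  by apply: dom_determined_cons domG => m m'; rewrite !holds_not_bound => /negbTE -> /negbTE ->.
apply: perm_trans (perm_cat (IH _ EG dom1) (IH _ EG dom2)) _.
have filter_and B : filter (holds (FAnd G B)) D = filter (holds B) (filter (holds G) D).
  by rewrite -filter_predI; apply: eq_filter => m; rewrite holds_and andbC.
rewrite !filter_and (eq_filter (holds_bound X)) (eq_filter (holds_not_bound X)).
by rewrite perm_filterC.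
Qed.

Definition tautology (X : V) : formula := FOr (FBound T X) (FNot (FBound T X)).

Lemma meq_split_block_diff (X : V) (O1 O2 : mset) :
  meq (ceval (split_bound (fvars F) (tautology X) block_diff) O1 O2) (diffF F O1 O2).
Proof.
apply: meq_perm; have holdsT m : holds (tautology X) m by rewrite /holds /=; case: (m X).
rewrite -[diffF _ _ _]filter_predT -(eq_filter holdsT).
apply: perm_split_bound => [G' domG'|m m' _ _ dom //].
by apply: block_diffE => m m' Gm Gm'; apply: domG' => // ? [].
Qed.

End ExpressDifference.

Unset Implicit Arguments.

(* Infinitude of V only provides a variable for the tautology the partition
   starts from. *)
Theorem lemma1 (V I L : Type)
  (hV : infinite_type V) (hI : infinite_type I) (hL : infinite_type L)
  (F : formula V (I + L)) :
  exists E : cexpr V (I + L),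
    forall O1 O2 : mset V (I + L), meq (ceval E O1 O2) (diffF F O1 O2).
Proof.
have [var _] := hV.
exists (split_bound (fvars F) (tautology _ (var 0)) (block_diff F)).
exact: meq_split_block_diff.
Qed.
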